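(* Let $\mathcal M=(E_{2n},\mathcal C)$ be a P-matroid, let $i\in[n]$, and let $\widehat{\mathcal M}$ be the lexicographic extension of $\mathcal M$ by $[-\cdot t_i]$. Let $O$ be the partial P-matroid USO defined by $\widehat{\mathcal M}$. Then: (a) for every $v$ with $v_i=1$ we have $O(v)_i=-$ and $O(v)_j=0$ for all $j\neq i$ (so the upper $i$-facet $\{v:v_i=1\}$ is a maximal unoriented subcube); (b) for every $w$ with $w_i=0$ we have $O(w)_i=+$ (so the upper $i$-facet is a hypersink, i.e., a hypervertex all of whose incident edges in dimension $i$ are incoming); (c) if $\mathcal M$ is uniform, then $O(w)_j\neq0$ for all $w$ with $w_i=0$ and all $j\in[n]$.
   Context: An oriented matroid $(E,\mathcal C)$ is given by circuits $X\in\{-,0,+\}^E$ with support $\underline X$; bases are inclusion-maximal subsets containing no circuit support; all bases have the same size (the rank); the oriented matroid is uniform if every subset of size equal to the rank is a basis. Cocircuits $\mathcal C^*$ are the circuits of the dual (inclusion-minimal nonzero signed sets orthogonal to all circuits). For a basis $B$, $e\notin B$: $C(B,e)$ is the unique circuit $X$ with $X_e=+$, $\underline X\subseteq B\cup\{e\}$; for $e\in B$: $C^*(B,e)$ is the unique cocircuit $D$ with $D_e=+$, $\underline D\cap(B\setminus\{e\})=\emptyset$. A localization for $\mathcal M$ is a function $\sigma:\mathcal C^*\to\{-,0,+\}$ specifying an extension $\widehat{\mathcal M}$ to $E\cup\{q\}$ such that for every cocircuit $Y$ of $\mathcal M$, $(Y,\sigma(Y))$ (sign $\sigma(Y)$ on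 $q$) is a cocircuit of $\widehat{\mathcal M}$. For $e\in E$ and $s\in\{-,0,+\}$, the function $\sigma(D)=s\cdot D_e$ if $D_e\neq0$, $\sigma(D)=0$ otherwise, is a localization; the extension it specifies is the lexicographic extension by $[s\cdot e]$. $S=\{s_1,\dots,s_n\}$, $T=\{t_1,\dots,t_n\}$, $E_{2n}=S\cup T$; a P-matroid is an oriented matroid on $E_{2n}$ in which $S$ is a basis and no circuit $X$ satisfies $X_{s_i}=-X_{t_i}$ for all $i$ with $\{s_i,t_i\}\subseteq\underline X$. For $v\in\{0,1\}^n$, $B(v)=\{s_j:v_j=0\}\cup\{t_j:v_j=1\}$. The partial P-matroid USO of $\widehat{\mathcal M}$ is $O:\{0,1\}^n\to\{-,0,+\}^n$ with, for $C=C(B(v),q)$ and $e=s_j$ if $v_j=0$, $e=t_j$ if $v_j=1$: $O(v)_j=+$ if $C_e=-$ (outgoing), $-$ if $C_e=+$ (incoming), $0$ if $C_e=0$ (unoriented). *)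

From mathcomp Require Import all_boot.
Set Implicit Arguments. Unset Strict Implicit. Unset Printing Implicit Defensive.

(* Signs {-,0,+} encoded as option bool: None = 0, Some true = +, Some false = -. *)
Definition sz : option bool := None.
Definition sp : option bool := Some true.
Definition sm : option bool := Some false.
Definition sneg (a : option bool) : option bool := omap negb a.
Definition smul (a b : option bool) : option bool :=
  match a, b with Some x, Some y => Some (x == y) | _, _ => None end.

Definition signed (T : finType) := {ffun T -> option bool}.

Section SignedSets.
Variable T : finType.
Implicit Types (X Y Z D : signed T) (C : {set signed T}).

Definition supp X : {set T} := [set e | X e != sz].
Definition posp X : {set T} := [set e | X e == sp].
Definition negp X : {set T} := [set e | X e == sm].
Definition opp X : signed T := [ffun e => sneg (X e)].

Definition is_OM C : Prop :=
  [/\ (forall X, X \in C -> supp X != set0),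
      (forall X, X \in C -> opp X \in C),
      (forall X Y, X \in C -> Y \in C -> supp X \subset supp Y -> X = Y \/ X = opp Y)
    & (forall X Y e, X \in C -> Y \in C -> X != opp Y ->
         e \in posp X -> e \in negp Y ->
         exists2 Z, Z \in C &
           (posp Z \subset (posp X :|: posp Y) :\ e) &&
           (negp Z \subset (negp X :|: negp Y) :\ e))].

Definition orthogonal X Y : bool :=
  [disjoint supp X & supp Y] ||
  ([exists e, smul (X e) (Y e) == sp] && [exists f, smul (X f) (Y f) == sm]).

Definition orth_all C D : bool := [forall X in C, orthogonal X D].

Definition cocircuits C : {set signed T} :=
  [set D | [&& supp D != set0, orth_all C D &
     [forall D' : signed T, (supp D' != set0) && orth_all C D' ==>
                             ~~ (supp D' \proper supp D)]]].

Definition independent C (A : {set T}) : bool := [forall X in C, ~~ (supp X \subset A)].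
Definition is_basis C (B : {set T}) : bool :=
  independent C B && [forall A : {set T}, (B \proper A) ==> ~~ independent C A].

Definition uniform C : Prop :=
  forall B A : {set T}, is_basis C B -> #|A| = #|B| -> is_basis C A.

End SignedSets.

(* Ground set E_{2n} = S u T: (false, j) = s_j, (true, j) = t_j. *)
Definition E2n (n : nat) : finType := (bool * 'I_n)%type.
Definition s_ {n} (j : 'I_n) : E2n n := (false, j).
Definition t_ {n} (j : 'I_n) : E2n n := (true, j).
Definition Sset (n : nat) : {set E2n n} := [set e : E2n n | ~~ e.1].

Definition P_matroid (n : nat) (C : {set signed (E2n n)}) : Prop :=
  [/\ is_OM C, is_basis C (Sset n) &
      ~ (exists2 X, X \in C &
          forall j : 'I_n, X (s_ j) != sz -> X (t_ j) != sz ->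
                           X (s_ j) = sneg (X (t_ j)))].

(* Extensions to E u {q}, with q = None. *)
Section Extension.
Variable E : finType.

Definition restr (X : signed (option E)) : signed E := [ffun e => X (Some e)].
Definition extq (Y : signed E) (a : option bool) : signed (option E) :=
  [ffun o => match o with None => a | Some e => Y e end].

Definition extension_by (C : {set signed E}) (sigma : signed E -> option bool)
    (Ch : {set signed (option E)}) : Prop :=
  [/\ is_OM Ch,
      C = [set restr X | X in Ch & X None == sz]
    & forall Y, Y \in cocircuits C -> extq Y (sigma Y) \in cocircuits Ch].

(* Lexicographic localization [s . e]: sigma(D) = s * D_e (0 if D_e = 0). *)
Definition lex_loc (s : option bool) (e : E) (D : signed E) : option bool :=
  smul s (D e).

Definition lex_extension (C : {set signed E}) (s : option bool) (e : E)
    (Ch : {set signed (option E)}) : Prop :=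
  extension_by C (lex_loc s e) Ch.

(* Fundamental circuit C(B, q): the (unique, when B is a basis) circuit X of Ch
   with X_q = + and support in B u {q}. *)
Definition fund_circ_q (Ch : {set signed (option E)}) (B : {set E}) :
    option (signed (option E)) :=
  [pick X in Ch | (X None == sp) &&
     [forall o : option E, (X o != sz) ==>
        (if o is Some e then e \in B else true)]].
End Extension.

(* B(v) = {s_j : v_j = 0} u {t_j : v_j = 1}, with 0 = false, 1 = true. *)
Definition Bv {n} (v : {ffun 'I_n -> bool}) : {set E2n n} := [set e : E2n n | e.1 == v e.2].

(* Partial P-matroid USO: O(v)_j = - C_e, where e = s_j or t_j is the element of B(v)
   with index j and C = C(B(v), q). *)
Definition USO {n} (Ch : {set signed (option (E2n n))}) (v : {ffun 'I_n -> bool})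
    (j : 'I_n) : option bool :=
  match fund_circ_q Ch (Bv v) with
  | Some X => sneg (X (Some ((v j, j) : E2n n)))
  | None => sz
  end.

From mathcomp Require Import all_boot.
Set Implicit Arguments. Unset Strict Implicit. Unset Printing Implicit Defensive.

(* Let X = C(B(v), q) and, for e in B(v), let Y_e be the fundamental cocircuit
   of e with respect to B(v).  As (Y_e, -Y_e(t_i)) is a cocircuit of the
   extension and its products with X can only be nonzero at q and at e,
   orthogonality gives O(v)_e = -Y_e(t_i).  On the upper i-facet t_i lies in
   B(v), so Y_e(t_i) is 0 for e <> t_i and + for e = t_i: this is (a).  On the
   lower facet, the duality between fundamental circuits and cocircuits turns
   -Y_e(t_i) into Z_e, where Z is the fundamental circuit of t_i w.r.t. B(w);
   the P-matroid condition forces Z(s_i) = +, which is (b), and in a uniform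
   oriented matroid Z is supported on all of t_i |: B(w), which is (c). *)

Lemma snegK : involutive sneg. Proof. by case=> [[]|]. Qed.

Lemma sneg_eq a b : (sneg a == b) = (a == sneg b).
Proof. by case: a => [[]|]; case: b => [[]|]. Qed.

Lemma smul_eq0 a b : (smul a b == sz) = (a == sz) || (b == sz).
Proof. by case: a => [[]|]; case: b => [[]|]. Qed.

Lemma smulNl a b : smul (sneg a) b = sneg (smul a b).
Proof. by case: a => [[]|]; case: b => [[]|]. Qed.

Lemma smulNr a b : smul a (sneg b) = sneg (smul a b).
Proof. by case: a => [[]|]; case: b => [[]|]. Qed.

Lemma smulr0 a : smul a sz = sz. Proof. by case: a => [[]|]. Qed.

Lemma smulr1 a : smul a sp = a. Proof. by case: a => [[]|]. Qed.

Section SignedSets.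
Variable T : finType.
Implicit Types (X Y Z : signed T) (e g : T).

Lemma in_supp X e : (e \in supp X) = (X e != sz). Proof. by rewrite inE. Qed.

Lemma oppE X e : opp X e = sneg (X e). Proof. by rewrite ffunE. Qed.

Lemma oppK : involutive (@opp T).
Proof. by move=> X; apply/ffunP=> e; rewrite !oppE snegK. Qed.

Lemma supp_opp X : supp (opp X) = supp X.
Proof. by apply/setP=> e; rewrite !inE oppE; case: (X e) => [[]|]. Qed.

Definition composed Z X Y := forall g, Z g = sz \/ Z g = X g \/ Z g = Y g.

Lemma composed_supp Z X Y : composed Z X Y -> supp Z \subset supp X :|: supp Y.
Proof.
move=> HZ; apply/subsetP=> g; rewrite !inE.
by case: (HZ g) => [->|[]->] // ->; rewrite ?orbT.
Qed.

Lemma composed_sym Z X Y : composed Z X Y -> composed Z Y X.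
Proof. by move=> HZ g; case: (HZ g) => [|[]]; auto. Qed.

Lemma composed_eq Z X Y g : composed Z X Y -> Z g != sz -> Y g = sz -> Z g = X g.
Proof.
move=> HZ HZg HYg; case: (HZ g) => [E|[E|E]] //.
all: by move: HZg; rewrite E ?HYg eqxx.
Qed.

Lemma composed_eq0 Z X Y g : composed Z X Y -> X g = sz -> Y g = sz -> Z g = sz.
Proof. by move=> HZ HX HY; case: (HZ g) => [|[]] ->. Qed.

Lemma composed_of_elim Z X Y e :
  posp Z \subset (posp X :|: posp Y) :\ e ->
  negp Z \subset (negp X :|: negp Y) :\ e -> Z e = sz /\ composed Z X Y.
Proof.
move=> /subsetP Hp /subsetP Hn; split.
  case E: (Z e) => [[]|] //.
    by have := Hp e; rewrite !inE E eqxx /= => /(_ isT).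
  by have := Hn e; rewrite !inE E eqxx /= => /(_ isT).
move=> g; case E: (Z g) => [[]|]; [| |by left].
  have := Hp g; rewrite !inE E eqxx /= => /(_ isT) /andP[_ /orP[] /eqP ->]; auto.
have := Hn g; rewrite !inE E eqxx /= => /(_ isT) /andP[_ /orP[] /eqP ->]; auto.
Qed.

Lemma card_ltP (A B : {set T}) x :
  A \subset B -> x \in B -> x \notin A -> #|A| < #|B|.
Proof. by move=> sAB xB xA; apply/proper_card/properP; split=> //; exists x. Qed.

End SignedSets.

Section Circuits.
Variables (T : finType) (C : {set signed T}).
Hypothesis HOM : is_OM C.
Implicit Types (X Y Z V W : signed T) (e f g : T).

Lemma opp_circ X : X \in C -> opp X \in C.
Proof. by case: HOM => _ H _ _; apply: H. Qed.

Lemma circ_sub_supp X Y :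
  X \in C -> Y \in C -> supp X \subset supp Y -> X = Y \/ X = opp Y.
Proof. by case: HOM => _ _ H _; apply: H. Qed.

Lemma circ_orient X f : X \in C -> X f != sz ->
  exists2 X', X' \in C & X' f = sp /\ supp X' = supp X.
Proof.
move=> HX; case E: (X f) => [[]|] // _; first by exists X.
by exists (opp X); rewrite ?opp_circ ?oppE ?E ?supp_opp.
Qed.

Lemma circ_escapes Z X e : Z \in C -> X \in C -> Z e = sz -> X e != sz ->
  exists2 g, Z g != sz & X g = sz.
Proof.
move=> HZ HX HZe HXe.
have /subsetPn[g] : ~~ (supp Z \subset supp X).
  apply/negP => /(circ_sub_supp HZ HX) E.
  by move: HZe HXe; case: E => ->; rewrite ?oppE; case: (X e) => [[]|].
by rewrite !in_supp negbK => HZg /eqP HXg; exists g.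
Qed.

Lemma weak_elim X Y e : X \in C -> Y \in C -> X != opp Y ->
  X e != sz -> Y e = sneg (X e) -> exists2 Z, Z \in C & Z e = sz /\ composed Z X Y.
Proof.
case: HOM => _ _ _ Helim HX HY HXY.
case E: (X e) => [[]|] // _ /= EY.
  have [||Z HZ /andP[H1 H2]] := Helim X Y e HX HY HXY; try by rewrite inE ?E ?EY.
  by exists Z => //; exact: (composed_of_elim H1 H2).
have HYX : Y != opp X by apply: contra HXY => /eqP ->; rewrite oppK.
have [||Z HZ /andP[H1 H2]] := Helim Y X e HY HX HYX; try by rewrite inE ?E ?EY.
by exists Z => //; have [-> /composed_sym] := composed_of_elim H1 H2.
Qed.

Definition strong_elim_upto k : Prop := forall X Y e f, X \in C -> Y \in C ->
  #|supp X :|: supp Y| <= k -> X e != sz -> Y e = sneg (X e) ->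
  X f != sz -> Y f = sz ->
  exists2 Z, Z \in C & [/\ Z e = sz, Z f != sz & composed Z X Y].

(* The end of the inductive step of strong elimination: a circuit V vanishing
   at e and not at f, whose entries come from X, Y or -Z3, is traded for one
   composed of X and Y only, by repeatedly eliminating against Z3 the entries
   of V that do not come from X or Y. *)
Lemma strong_elim_cleanup k X Y Z3 e f : strong_elim_upto k ->
  #|supp X :|: supp Y| <= k.+1 -> X e != sz ->
  Z3 \in C -> Z3 e = sz -> Z3 f = sz -> composed Z3 X Y ->
  forall V, V \in C -> V e = sz -> V f != sz ->
  (forall g, V g = sz \/ V g = X g \/ V g = Y g \/ V g = sneg (Z3 g)) ->
  exists2 Z, Z \in C & [/\ Z e = sz, Z f != sz & composed Z X Y].
Proof.
move=> IH Hk HXe HZ3 HZ3e HZ3f HZ3c V.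
pose bad V := [set g | ~~ [|| V g == sz, V g == X g | V g == Y g]].
have [m] := ubnP #|bad V|; elim: m V => // m IHm V Hb HV HVe HVf HVc.
have [Eb|[j Hj]] := set_0Vmem (bad V).
  exists V => //; split=> // g; have : g \notin bad V by rewrite Eb inE.
  by rewrite inE negbK => /or3P[] /eqP; auto.
have HVj : V j = sneg (Z3 j).
  by move: Hj; rewrite inE; case: (HVc j) => [->|[->|[->|->]]]; rewrite ?eqxx ?orbT.
have HVj0 : V j != sz by move: Hj; rewrite inE; apply: contra => /eqP ->.
have HsZ3 := subsetP (composed_supp HZ3c).
have HsV : supp V \subset supp X :|: supp Y.
  apply/subsetP => g; rewrite in_supp.
  case: (HVc g) => [->|[->|[->|->]]] H; first by rewrite eqxx in H.
  - by rewrite !inE H.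
  - by rewrite !inE H orbT.
  - by apply: HsZ3; rewrite in_supp; move: H; case: (Z3 g) => [[]|].
have Hsize : #|supp V :|: supp Z3| <= k.
  rewrite -ltnS; apply: leq_trans Hk; apply: (card_ltP (x := e)).
  - by rewrite subUset HsV composed_supp.
  - by rewrite !inE HXe.
  - by rewrite !inE HVe HZ3e eqxx.
have [|V' HV' [HV'j HV'f HV'c]] := IH V Z3 j f HV HZ3 Hsize HVj0 _ HVf HZ3f.
  by rewrite HVj snegK.
apply: (IHm V') => //.
- rewrite -ltnS; apply: leq_trans Hb; apply: (card_ltP (x := j)) => //.
    apply/subsetP => g; rewrite !inE; case: (HV'c g) => [->|[->|->]] //.
    by case: (HZ3c g) => [->|[->|->]]; rewrite eqxx ?orbT.
  by rewrite inE HV'j eqxx.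
- exact: composed_eq0 HV'c HVe HZ3e.
- move=> g; case: (HV'c g) => [->|[->|->]]; [by left|exact: HVc|].
  by case: (HZ3c g) => [->|[->|->]]; auto.
Qed.

Lemma strong_elim_bounded k : strong_elim_upto k.
Proof.
elim: k => [|k IH] X Y e f HX HY Hk HXe HYe HXf HYf.
  by move: Hk; rewrite leqn0 cards_eq0 => /eqP/setP/(_ e); rewrite !inE HXe.
have HXY : X != opp Y by apply/eqP => E; move: HXf; rewrite E oppE HYf.
have [Z3 HZ3 [HZ3e HZ3c]] := weak_elim HX HY HXY HXe HYe.
have [HZ3f|HZ3f] := eqVneq (Z3 f) sz; last by exists Z3.
have [g HZ3g HXg] := circ_escapes HZ3 HX HZ3e HXe.
have HYg : Y g = Z3 g by rewrite (composed_eq (composed_sym HZ3c)).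
have HsZ3 := composed_supp HZ3c.
(* Eliminate g between Y and -Z3, keeping e. *)
have HsizeY : #|supp Y :|: supp (opp Z3)| <= k.
  rewrite -ltnS; apply: leq_trans Hk; apply: (card_ltP (x := f)).
  - by rewrite supp_opp subUset subsetUr HsZ3.
  - by rewrite !inE HXf.
  - by rewrite supp_opp !inE HYf HZ3f eqxx.
have [||||Y' HY' [HY'g HY'e HY'c]] := IH Y (opp Z3) g e HY (opp_circ HZ3) HsizeY.
- by rewrite HYg.
- by rewrite oppE HYg.
- by rewrite HYe; case: (X e) HXe => [[]|].
- by rewrite oppE HZ3e.
have HY'eY : Y' e = Y e by rewrite (composed_eq HY'c) // oppE HZ3e.
have HsY' : supp Y' \subset supp X :|: supp Y.
  apply: subset_trans (composed_supp HY'c) _.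
  by rewrite supp_opp subUset subsetUr HsZ3.
(* Eliminate e between X and Y', keeping f. *)
have HsizeX : #|supp X :|: supp Y'| <= k.
  rewrite -ltnS; apply: leq_trans Hk; apply: (card_ltP (x := g)).
  - by rewrite subUset subsetUl HsY'.
  - by rewrite !inE HYg HZ3g orbT.
  - by rewrite !inE HXg HY'g eqxx.
have HY'f : Y' f = sz by rewrite (composed_eq0 HY'c) // oppE HZ3f.
have [W HW [HWe HWf HWc]] := IH X Y' e f HX HY' HsizeX HXe (etrans HY'eY HYe) HXf HY'f.
apply: (strong_elim_cleanup IH Hk HXe HZ3 HZ3e HZ3f HZ3c HW HWe HWf) => j.
case: (HWc j) => [->|[->|->]]; auto.
by case: (HY'c j) => [->|[->|->]]; rewrite ?oppE; auto.
Qed.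

Lemma strong_elim X Y e f : X \in C -> Y \in C -> X e != sz -> Y e = sneg (X e) ->
  X f != sz -> Y f = sz ->
  exists2 Z, Z \in C & [/\ Z e = sz, Z f != sz & composed Z X Y].
Proof. by move=> HX HY; apply: strong_elim_bounded HX HY (leqnn _). Qed.

Lemma supp_elim X Y e : X \in C -> Y \in C -> X e != sz -> Y e != sz ->
  supp X != supp Y -> exists2 Z, Z \in C & supp Z \subset (supp X :|: supp Y) :\ e.
Proof.
move=> HX HY HXe HYe Hs.
pose Y' := if Y e == sneg (X e) then Y else opp Y.
have HY' : Y' \in C by rewrite /Y'; case: ifP => _; [|exact: opp_circ].
have HsY' : supp Y' = supp Y by rewrite /Y'; case: ifP; rewrite ?supp_opp.
have HY'e : Y' e = sneg (X e).
  rewrite /Y'; case: ifP => [/eqP //|]; rewrite oppE.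
  by case: (X e) HXe => [[]|]; case: (Y e) HYe => [[]|].
have HXY' : X != opp Y' by apply: contra Hs => /eqP ->; rewrite supp_opp HsY'.
have [Z HZ [HZe HZc]] := weak_elim HX HY' HXY' HXe HY'e.
exists Z => //; apply/subsetP => g Hg.
rewrite in_setD1 -HsY' (subsetP (composed_supp HZc)) // andbT.
by apply: contraTneq Hg => ->; rewrite in_supp HZe eqxx.
Qed.

Lemma dep_circ A : ~~ independent C A -> exists2 X, X \in C & supp X \subset A.
Proof. by rewrite negb_forall_in => /existsP[X /andP[HX]]; rewrite negbK; exists X. Qed.

Lemma indep_circ A X : independent C A -> X \in C -> ~~ (supp X \subset A).
Proof. by move=> /forall_inP H /H. Qed.

Lemma indep_circ_hits J X e : independent C J -> X \in C -> supp X \subset e |: J ->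
  X e != sz.
Proof.
move=> HJ HX HsX; apply: contraNneq (indep_circ HJ HX) => HXe.
apply/subsetP => g Hg; move: (subsetP HsX g Hg); rewrite in_setU1.
by case/orP => // /eqP Eg; move: Hg; rewrite Eg in_supp HXe eqxx.
Qed.

Lemma circ_supp_unique J X Y e : independent C J -> X \in C -> Y \in C ->
  supp X \subset e |: J -> supp Y \subset e |: J -> supp X = supp Y.
Proof.
move=> HJ HX HY HsX HsY; apply/eqP/negPn/negP => Hne.
have [Z HZ HsZ] := supp_elim HX HY (indep_circ_hits HJ HX HsX)
  (indep_circ_hits HJ HY HsY) Hne.
apply: (negP (indep_circ HJ HZ)); apply: (subset_trans HsZ).
by rewrite subDset subUset HsX HsY.
Qed.

(* The fundamental circuit of f with respect to B: a circuit, positive at f,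
   with support in f |: B (it exists when B is a basis and f is not in B). *)
Definition fund_circ (B : {set T}) f : signed T :=
  odflt [ffun _ => sz] [pick X in C | (X f == sp) && (supp X \subset f |: B)].

Lemma fund_circP B f : is_basis C B -> f \notin B ->
  [/\ fund_circ B f \in C, fund_circ B f f = sp & supp (fund_circ B f) \subset f |: B].
Proof.
move=> /andP[HI /forallP Hmax] HfB.
have /dep_circ[X HX HsX] : ~~ independent C (f |: B).
  by apply: (implyP (Hmax _)); rewrite properUr // sub1set.
have [X' HX' [HX'f HsX']] := circ_orient HX (indep_circ_hits HI HX HsX).
rewrite /fund_circ; case: pickP => [Z /and3P[HZ /eqP HZf HsZ] //|/(_ X')].
by rewrite HX' HX'f eqxx HsX' HsX.
Qed.

Lemma rank_le B J : is_basis C B -> independent C J -> #|J| <= #|B|.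
Proof.
move=> HB; have /andP[HI /forallP Hmax] := HB.
have [m] := ubnP #|B :\: J|; elim: m J => // m IH J Hm HJ.
rewrite leqNgt; apply/negP => Hgt.
have [HBJ|/subsetPn[e HeB HeJ]] := boolP (B \subset J).
  by move: (implyP (Hmax J)); rewrite properEcard HBJ Hgt HJ => /(_ isT).
(* exchanging any f of J \ B for e creates a circuit *)
have Hexch f : f \in J -> f \notin B -> ~~ independent C (e |: (J :\ f)).
  move=> HfJ HfB; apply/negP => Hind; move: Hgt; rewrite ltnNge.
  have -> : #|J| = #|e |: (J :\ f)|.
    by rewrite cardsU1 in_setD1 (negbTE HeJ) andbF (cardsD1 f J) HfJ.
  move/negP; apply; apply: IH Hind; rewrite -ltnS (leq_trans _ Hm) // ltnS.
  apply: (card_ltP (x := e)); last by rewrite !inE eqxx.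
    apply/subsetP => x; rewrite !inE negb_or negb_and negbK => /andP[/andP[_ Hx] HxB].
    rewrite HxB andbT; case/orP: Hx => [/eqP Exf|//].
    by move: HfB; rewrite -Exf HxB.
  by rewrite inE HeB HeJ.
have /subsetPn[f0 Hf0J Hf0B] : ~~ (J \subset B).
  by apply: contraTN Hgt => /subset_leq_card; rewrite leqNgt.
have /dep_circ[X HX HsX] := Hexch f0 Hf0J Hf0B.
have /subsetPn[g HgX HgB] := indep_circ HI HX.
have HgJ : g \in J :\ f0.
  by move: (subsetP HsX g HgX); rewrite in_setU1; case/orP => // /eqP Eg; rewrite Eg HeB in HgB.
have /dep_circ[X1 HX1 HsX1] := Hexch g (subsetP (subsetDl J _) g HgJ) HgB.
have HJ' (f : T) : e |: (J :\ f) \subset e |: J by rewrite setUS ?subsetDl.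
have Es := circ_supp_unique HJ HX HX1 (subset_trans HsX (HJ' f0)) (subset_trans HsX1 (HJ' g)).
(* g is in supp X = supp X1, which lies in e |: (J :\ g); so g = e, inside B *)
move: (subsetP HsX1 g); rewrite -Es HgX !inE eqxx /= orbF => /(_ isT) /eqP Ege.
by rewrite Ege HeB in HgB.
Qed.

End Circuits.

Section Orthogonality.
Variable T : finType.
Implicit Types (X Y D : signed T) (C : {set signed T}) (A : {set T}).

Lemma orth_prod X D g : orthogonal X D -> smul (X g) (D g) != sz ->
  (exists h, smul (X h) (D h) = sp) /\ (exists h, smul (X h) (D h) = sm).
Proof.
case/orP=> [|/andP[/existsP[h /eqP Hh] /existsP[h' /eqP Hh']]]; last first.
  by split; [exists h|exists h'].
rewrite disjoint_subset => /subsetP Hd; rewrite smul_eq0 negb_or => /andP[H1 H2].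
by have := Hd g; rewrite !inE H1 H2 => /(_ isT).
Qed.

Lemma orth_of_prod X D : (forall g, smul (X g) (D g) != sz ->
    (exists h, smul (X h) (D h) = sp) /\ (exists h, smul (X h) (D h) = sm)) ->
  orthogonal X D.
Proof.
move=> H; have [/existsP[g /H[[h Hh] [h' Hh']]]|Hno] :=
  boolP [exists g, smul (X g) (D g) != sz].
  by apply/orP; right; apply/andP; split; apply/existsP; [exists h|exists h']; apply/eqP.
apply/orP; left; rewrite disjoint_subset; apply/subsetP => x; rewrite !inE => H1.
by move: Hno; rewrite negb_exists => /forallP /(_ x); rewrite smul_eq0 negb_or H1.
Qed.

Lemma orth_opp X D : orthogonal X (opp D) = orthogonal X D.
Proof.
rewrite /orthogonal supp_opp andbC; congr (_ || (_ && _)); apply: eq_existsb => g;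
by rewrite oppE smulNr sneg_eq.
Qed.

Lemma cocirc_opp C Y : Y \in cocircuits C -> opp Y \in cocircuits C.
Proof.
rewrite !inE supp_opp; suff -> : orth_all C (opp Y) = orth_all C Y by [].
by apply: eq_forallb => X; rewrite orth_opp.
Qed.

Lemma cocirc_orth C Y X : Y \in cocircuits C -> X \in C -> orthogonal X Y.
Proof. by rewrite inE => /and3P[_ /forall_inP H _] /H. Qed.

Lemma orth_pair X D a b : orthogonal X D ->
  (forall h, smul (X h) (D h) != sz -> h = a \/ h = b) ->
  smul (X b) (D b) = sneg (smul (X a) (D a)).
Proof.
move=> Ho Hloc.
have key g : smul (X g) (D g) != sz -> smul (X b) (D b) = sneg (smul (X a) (D a)).
  move=> Hg; have [[h Hh] [h' Hh']] := orth_prod Ho Hg.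
  have Eh : h = a \/ h = b by apply: Hloc; rewrite Hh.
  have Eh' : h' = a \/ h' = b by apply: Hloc; rewrite Hh'.
  by case: Eh Eh' Hh Hh' => -> [] -> Hh Hh'; rewrite ?Hh ?Hh' //; move: Hh; rewrite Hh'.
have [Ha|] := eqVneq (smul (X a) (D a)) sz; last exact: key.
have [Hb|] := eqVneq (smul (X b) (D b)) sz; last exact: key.
by rewrite Ha Hb.
Qed.

Lemma orth_pair_supp X D A a b : orthogonal X D -> supp X \subset A ->
  (forall h, h \in A -> h != a -> h != b -> D h = sz) ->
  smul (X b) (D b) = sneg (smul (X a) (D a)).
Proof.
move=> Ho HsX HD; apply: (orth_pair Ho) => h; rewrite smul_eq0 negb_or => /andP[HXh HDh].
have HhA : h \in A by apply: (subsetP HsX); rewrite in_supp.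
case: (eqVneq h a) => [|Ha]; [by left|right].
by apply/eqP; apply: contraNT HDh => Hb; rewrite HD.
Qed.

End Orthogonality.

Section FundamentalCocircuit.
Variables (T : finType) (C : {set signed T}) (B : {set T}) (e : T).
Hypotheses (HOM : is_OM C) (HB : is_basis C B) (HeB : e \in B).
Implicit Types (X Z : signed T) (f g : T).

Definition fund_cosign : signed T :=
  [ffun g => if g == e then sp else if g \in B then sz else sneg (fund_circ C B g e)].
Local Notation D := fund_cosign.

Lemma fund_cosign_e : D e = sp. Proof. by rewrite ffunE eqxx. Qed.

Lemma fund_cosign_B b : b \in B -> b != e -> D b = sz.
Proof. by move=> Hb Hbe; rewrite ffunE (negbTE Hbe) Hb. Qed.

Definition counter X f : signed T :=
  if X f == sp then opp (fund_circ C B f) else fund_circ C B f.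

Lemma counterP X f : f \notin B -> X f != sz ->
  [/\ counter X f \in C, counter X f f = sneg (X f),
      supp (counter X f) \subset f |: B & counter X f e = smul (X f) (D f)].
Proof.
move=> HfB HXf; have [HF HFf HsF] := fund_circP HOM HB HfB.
have -> : D f = sneg (fund_circ C B f e).
  by rewrite ffunE (negbTE HfB); case: eqVneq HfB => // ->; rewrite HeB.
rewrite /counter; case: (X f) HXf => [[]|] //= _.
all: split; rewrite ?opp_circ ?oppE ?HFf ?supp_opp //.
all: by case: (fund_circ C B f e) => [[]|].
Qed.

Definition nonneg_against X := forall g, smul (X g) (D g) != sm.

(* Inductive step: if all circuits with fewer points outside B and no
   negative product with D are orthogonal to D in the trivial way, a circuit
   X with a positive product at g cannot have a point f outside B whose
   counter circuit vanishes at g: strong elimination of f between X and its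
   counter circuit would produce a smaller such circuit keeping g. *)
Lemma nonneg_step m X f g :
  (forall Z, #|supp Z :\: B| < m -> Z \in C -> nonneg_against Z ->
     forall g, smul (Z g) (D g) = sz) ->
  X \in C -> #|supp X :\: B| < m.+1 -> nonneg_against X ->
  f \notin B -> X f != sz -> g != f -> smul (X g) (D g) = sp -> counter X f g = sz ->
  False.
Proof.
move=> IH HX Hm Hnn HfB HXf Hgf Hg HWg.
have [HW HWf HsW HWe] := counterP HfB HXf.
have HXg : X g != sz by move: Hg; case: (X g).
have [Z HZ [HZf HZg HZc]] :=
  strong_elim HOM HX HW HXf HWf HXg HWg.
have HZX j : Z j != sz -> j \notin B -> Z j = X j.
  move=> HZj HjB; case: (HZc j) => [E|[//|Ej]]; first by rewrite E eqxx in HZj.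
  have : j \in f |: B by apply: (subsetP HsW); rewrite in_supp -Ej.
  rewrite in_setU1 (negbTE HjB) orbF => /eqP Ejf.
  by move: HZj; rewrite Ejf HZf eqxx.
have Hsize : #|supp Z :\: B| < m.
  rewrite -ltnS (leq_trans _ Hm) // ltnS; apply: (card_ltP (x := f)).
  - apply/subsetP => j; rewrite !inE => /andP[HjB HZj].
    by rewrite HjB -(HZX j HZj HjB) HZj.
  - by rewrite !inE HfB HXf.
  - by rewrite !inE HZf eqxx andbF.
have Hnn' : nonneg_against Z.
  move=> j; case: (HZc j) => [->|[->|Ej]] //; rewrite Ej.
  have [->//|HWj] := eqVneq (counter X f j) sz.
  have : j \in f |: B by apply: (subsetP HsW); rewrite in_supp.
  rewrite in_setU1 => /orP[/eqP Ejf|HjB]; first by move: HWj; rewrite -Ej Ejf HZf eqxx.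
  have [->|Hje] := eqVneq j e; first by rewrite HWe fund_cosign_e smulr1.
  by rewrite fund_cosign_B // smulr0.
have HZgX : Z g = X g by rewrite (composed_eq HZc).
by move: (IH Z Hsize HZ Hnn' g); rewrite HZgX Hg.
Qed.

(* A circuit with no negative product with D cannot live in g |: B with a
   positive product at g: eliminating g against its counter circuit would
   leave a circuit inside B, unless X is the opposite of that counter circuit,
   whose product with D at e is then negative. *)
Lemma nonneg_single_outside X g : X \in C -> nonneg_against X -> g \notin B ->
  supp X \subset g |: B -> smul (X g) (D g) = sp -> False.
Proof.
move=> HX Hnn HgB HsX Hg; have /andP[HI _] := HB.
have HXg : X g != sz by move: Hg; case: (X g).
have [HW HWg HsW HWe] := counterP HgB HXg; rewrite Hg in HWe.
have [EX|HXW] := eqVneq X (opp (counter X g)).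
  by move: (Hnn e); rewrite fund_cosign_e smulr1 EX oppE HWe.
have [Z HZ [HZg HZc]] := weak_elim HOM HX HW HXW HXg HWg.
have HsZ : supp Z \subset g |: B.
  by apply: subset_trans (composed_supp HZc) _; rewrite subUset HsX HsW.
apply: (negP (indep_circ HI HZ)); apply/subsetP => j HZj.
move: (subsetP HsZ j HZj); rewrite in_setU1 => /orP[/eqP Ej|//].
by move: HZj; rewrite Ej in_supp HZg eqxx.
Qed.

Lemma nonneg_zero X : X \in C -> nonneg_against X -> forall g, smul (X g) (D g) = sz.
Proof.
have /andP[HI _] := HB.
have [m] := ubnP #|supp X :\: B|; elim: m X => // m IH X Hm HX Hnn g0.
apply/eqP/negPn/negP => Hg0.
have Hg0p : smul (X g0) (D g0) = sp by move: (Hnn g0) Hg0; case: smul => [[]|].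
have step := nonneg_step IH HX Hm Hnn.
have [/existsP[g1 /andP[Hg1B /eqP Hg1]]|/existsPn Hnone] :=
  boolP [exists g, (g \notin B) && (smul (X g) (D g) == sp)].
- have [/existsP[f /and3P[HXf HfB Hfg]]|/existsPn Honly] :=
    boolP [exists f, [&& X f != sz, f \notin B & f != g1]].
    (* the counter circuit of another f outside B vanishes at g1 *)
    apply: (step f g1 HfB HXf _ Hg1); first by rewrite eq_sym.
    have [_ _ HsW _] := counterP HfB HXf.
    apply/eqP/negPn/negP => HWg1; move: (subsetP HsW g1).
    by rewrite in_supp HWg1 in_setU1 (negbTE Hg1B) orbF eq_sym (negbTE Hfg) => /(_ isT).
  apply: (nonneg_single_outside HX Hnn Hg1B _ Hg1); apply/subsetP => j.
  by rewrite in_supp in_setU1 => HXj; move: (Honly j); rewrite HXj /= negb_and !negbK orbC.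
- (* the positive product sits at e; a point f of X outside B has zero
     product, so its counter circuit vanishes at e *)
  have Hg0B : g0 \in B by move: (Hnone g0); rewrite Hg0p eqxx andbT negbK.
  have Hg0e : g0 = e.
    by case: (eqVneq g0 e) => // Hne; move: Hg0p; rewrite fund_cosign_B // smulr0.
  have /subsetPn[f HXf HfB] := indep_circ HI HX; rewrite in_supp in HXf.
  have [_ _ _ HWe] := counterP HfB HXf.
  apply: (step f e HfB HXf); [by apply: contraNneq HfB => <-|by rewrite -Hg0e|].
  rewrite HWe; move: (Hnn f) (Hnone f); rewrite HfB /=.
  by case: smul => [[]|].
Qed.

Lemma fund_cosign_orth : orth_all C D.
Proof.
apply/forall_inP => X HX; apply: orth_of_prod => g Hg; split.
- have [/existsP[h /eqP Hh]|/existsPn Hn] := boolP [exists h, smul (X h) (D h) == sp].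
    by exists h.
  have Hnn : nonneg_against (opp X).
    by move=> j; rewrite oppE smulNl sneg_eq; apply: Hn.
  move: (nonneg_zero (opp_circ HOM HX) Hnn g); rewrite oppE smulNl => /eqP.
  by rewrite sneg_eq => /eqP E; rewrite E in Hg.
- have [/existsP[h /eqP Hh]|/existsPn Hn] := boolP [exists h, smul (X h) (D h) == sm].
    by exists h.
  by move: Hg; rewrite (nonneg_zero HX Hn) eqxx.
Qed.

End FundamentalCocircuit.

(* A signed set orthogonal to all circuits and vanishing on a basis is zero:
   test it against the fundamental circuit of each point outside the basis. *)
Lemma orth_zero_on_basis (T : finType) (C : {set signed T}) B (D : signed T) :
  is_OM C -> is_basis C B -> orth_all C D ->
  (forall b, b \in B -> D b = sz) -> forall g, D g = sz.
Proof.
move=> HOM HB /forall_inP HD HDB g.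
have [HgB|HgB] := boolP (g \in B); first exact: HDB.
have [HF HFg HsF] := fund_circP HOM HB HgB.
suff : smul (fund_circ C B g g) (D g) = sneg (smul (fund_circ C B g g) (D g)).
  by rewrite HFg; case: (D g) => [[]|].
apply: (orth_pair_supp (HD _ HF) HsF) => h.
by rewrite in_setU1 => /orP[/eqP->|/HDB->]; rewrite ?eqxx.
Qed.

(* The fundamental cocircuit: for e in a basis B there is a cocircuit, positive
   at e and vanishing on the rest of B (a support-minimal signed set
   orthogonal to all circuits inside the support of fund_cosign). *)
Lemma fund_cocircuit (T : finType) (C : {set signed T}) B e :
  is_OM C -> is_basis C B -> e \in B ->
  exists2 Y, Y \in cocircuits C & Y e = sp /\ (forall b, b \in B -> b != e -> Y b = sz).
Proof.
move=> HOM HB HeB; set D := fund_cosign C B e.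
pose P (D' : signed T) := [&& supp D' != set0, orth_all C D' & supp D' \subset supp D].
have HPD : P D.
  rewrite /P fund_cosign_orth // subxx !andbT.
  by apply/set0Pn; exists e; rewrite in_supp fund_cosign_e.
case: (arg_minnP (fun D' => #|supp D'|) HPD) => Y /and3P[HY1 HY2 HY3] Hmin.
have HYc : Y \in cocircuits C.
  rewrite inE HY1 HY2 /=; apply/forallP => D'; apply/implyP => /andP[H1 H2].
  apply/negP => Hpr; have HPD' : P D'.
    by rewrite /P H1 H2 (subset_trans (proper_sub Hpr)).
  by have := Hmin D' HPD'; rewrite leqNgt (proper_card Hpr).
have HYB b : b \in B -> b != e -> Y b = sz.
  move=> Hb Hbe; apply/eqP/negPn/negP => Hyb.
  by move: (subsetP HY3 b); rewrite !in_supp Hyb fund_cosign_B // eqxx => /(_ isT).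
have HYe : Y e != sz.
  apply: contra HY1 => /eqP HYe; apply/eqP/setP => x; rewrite !inE.
  rewrite (orth_zero_on_basis HOM HB HY2) ?eqxx // => b Hb.
  by case: (eqVneq b e) => [->|]; [exact: HYe|exact: HYB].
case E: (Y e) HYe => [[]|] // _; first by exists Y.
exists (opp Y); first exact: cocirc_opp.
by rewrite oppE E; split=> // b Hb Hbe; rewrite oppE HYB.
Qed.

Lemma fund_circ_cocirc (T : finType) (C : {set signed T}) B e f (Y : signed T) :
  is_OM C -> is_basis C B -> f \notin B ->
  Y \in cocircuits C -> Y e = sp -> (forall b, b \in B -> b != e -> Y b = sz) ->
  Y f = sneg (fund_circ C B f e).
Proof.
move=> HOM HB HfB HY HYe HYB; have [HF HFf HsF] := fund_circP HOM HB HfB.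
suff : smul (fund_circ C B f f) (Y f) = sneg (smul (fund_circ C B f e) (Y e)).
  by rewrite HFf HYe smulr1; case: (Y f) => [[]|].
apply: (orth_pair_supp (cocirc_orth HY HF) HsF) => h.
by rewrite in_setU1 => /orP[/eqP->|/HYB HhB]; rewrite ?eqxx // => /HhB.
Qed.

(* In a uniform oriented matroid, the fundamental circuit of f with respect
   to B is supported on all of f |: B, as f |: (B :\ e) is again a basis. *)
Lemma uniform_fund_circ (T : finType) (C : {set signed T}) B e f :
  is_OM C -> uniform C -> is_basis C B -> e \in B -> f \notin B ->
  fund_circ C B f e != sz.
Proof.
move=> HOM HU HB HeB HfB; have [HF _ HsF] := fund_circP HOM HB HfB.
apply/negP => /eqP HFe.
have /andP[HI _] : is_basis C (f |: (B :\ e)).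
  by apply: HU HB _; rewrite cardsU1 in_setD1 (negbTE HfB) andbF (cardsD1 e B) HeB.
apply: (negP (indep_circ HI HF)); apply/subsetP => x Hx.
move: (subsetP HsF x Hx); rewrite !inE => /orP[->//|->]; rewrite andbT orbC /=.
by apply/orP; left; apply: contraTneq Hx => ->; rewrite in_supp HFe eqxx.
Qed.

Section Extensions.
Variables (E : finType) (C : {set signed E}) (sigma : signed E -> option bool)
  (Ch : {set signed (option E)}).
Hypotheses (HOM : is_OM C) (Hext : extension_by C sigma Ch).
Implicit Types (X D : signed (option E)) (Y : signed E) (B : {set E}).

Lemma ext_OM : is_OM Ch. Proof. by case: Hext. Qed.

Lemma restrE X e : restr X e = X (Some e). Proof. by rewrite ffunE. Qed.

Lemma lift_circ Y : Y \in C -> exists2 X, X \in Ch & X None = sz /\ restr X = Y.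
Proof.
case: Hext => _ -> _ /imsetP[X]; rewrite inE => /andP[HX /eqP HXN] ->.
by exists X.
Qed.

Lemma restr_circ X : X \in Ch -> X None = sz -> restr X \in C.
Proof. by case: Hext => _ -> _ HX HXN; apply: imset_f; rewrite inE HX HXN eqxx. Qed.

Lemma ext_cocirc_orth Y X : Y \in cocircuits C -> X \in Ch ->
  orthogonal X (extq Y (sigma Y)).
Proof. by case: Hext => _ _ Hcoc /Hcoc; apply: cocirc_orth. Qed.

Lemma orth_restr X D : X None = sz -> orthogonal X D -> orthogonal (restr X) (restr D).
Proof.
move=> HXN Ho; apply: orth_of_prod => g; rewrite !restrE => /(orth_prod Ho).
have Hsome o : smul (X o) (D o) != sz -> exists h, o = Some h.
  by case: o => [h|]; [exists h|rewrite HXN].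
move=> [[h Hh] [h' Hh']]; split.
- by have [|g' Eg'] := Hsome h; [rewrite Hh|exists g'; rewrite !restrE -Eg'].
- by have [|g' Eg'] := Hsome h'; [rewrite Hh'|exists g'; rewrite !restrE -Eg'].
Qed.

Lemma in_Some_imset B f : (Some f \in None |: (Some @: B)) = (f \in B).
Proof. by rewrite in_setU1 /= (mem_imset _ _ Some_inj). Qed.

(* If q together with a basis B of C is independent in Ch, it is a basis of
   Ch: any other point f of E closes the lifted fundamental circuit of f. *)
Lemma ext_indep_basis B : is_basis C B -> independent Ch (None |: (Some @: B)) ->
  is_basis Ch (None |: (Some @: B)).
Proof.
move=> HB Hind; rewrite /is_basis Hind /=; apply/forallP => A; apply/implyP.
case/properP => HsA [[f|] HfA]; last by rewrite in_setU1 eqxx.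
rewrite in_Some_imset => HfB; have [HF HFf HsF] := fund_circP HOM HB HfB.
have [X HX [HXN HXF]] := lift_circ HF.
apply/negP => HA; apply: (negP (indep_circ HA HX)); apply/subsetP => -[g|].
  rewrite in_supp -restrE HXF -in_supp => /(subsetP HsF); rewrite in_setU1.
  by case/orP => [/eqP->//|HgB]; apply: (subsetP HsA); rewrite in_Some_imset.
by rewrite in_supp HXN eqxx.
Qed.

(* If the localization is nonzero on some cocircuit of C, then q is not a
   coloop of Ch: q together with a basis of C is dependent.  Otherwise the
   fundamental cocircuit of q would be supported on q alone, strictly inside
   the support of the cocircuit (Y0, sigma Y0) of Ch. *)
Lemma q_dependent B Y0 : is_basis C B -> Y0 \in cocircuits C -> sigma Y0 != sz ->
  ~~ independent Ch (None |: (Some @: B)).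
Proof.
move=> HB HY0 Hs0; apply/negP => /(ext_indep_basis HB) HbLB.
have [D HD [_ HDB]] := fund_cocircuit ext_OM HbLB (setU11 _ _).
move: HD; rewrite inE => /and3P[HD0 HDo _].
have HDS f : D (Some f) = sz.
  rewrite -restrE; apply: (orth_zero_on_basis HOM HB) => [|b Hb].
    apply/forall_inP => Y HY; have [X HX [HXN <-]] := lift_circ HY.
    by apply: orth_restr HXN _; apply: (forall_inP HDo).
  by rewrite restrE HDB ?in_Some_imset.
case: Hext => _ _ /(_ _ HY0); rewrite inE => /and3P[_ _ /forallP/(_ D)].
rewrite HD0 HDo /= => /negP; apply; apply/properP; split.
  by apply/subsetP => -[g|]; rewrite !in_supp ?HDS ?eqxx // ffunE.
have /set0Pn[g Hg] : supp Y0 != set0 by move: HY0; rewrite inE => /andP[].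
by exists (Some g); rewrite !in_supp ?HDS ?eqxx // ffunE -in_supp.
Qed.

Lemma fund_circ_qP B Y0 : is_basis C B -> Y0 \in cocircuits C -> sigma Y0 != sz ->
  exists X, [/\ fund_circ_q Ch B = Some X, X \in Ch, X None = sp &
                forall e, X (Some e) != sz -> e \in B].
Proof.
move=> HB HY0 Hs0; have /andP[HI _] := HB.
have [X HX HsX] := dep_circ (q_dependent HB HY0 Hs0).
have HXS e : X (Some e) != sz -> e \in B.
  by move=> He; move: (subsetP HsX (Some e)); rewrite in_supp in_Some_imset => /(_ He).
have HXN : X None != sz.
  apply/negP => /eqP HN; apply: (negP (indep_circ HI (restr_circ HX HN))).
  by apply/subsetP => e; rewrite in_supp restrE; exact: HXS.
have [X' HX' [HX'N HsX']] := circ_orient ext_OM HX HXN.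
have HX'S e : X' (Some e) != sz -> e \in B by rewrite -in_supp HsX' in_supp; exact: HXS.
rewrite /fund_circ_q; case: pickP => [Z /andP[HZ /andP[/eqP HZN /forallP HZs]]|/(_ X')].
  by exists Z; split => // e He; exact: (implyP (HZs (Some e)) He).
rewrite HX' HX'N eqxx /=; case/negP; apply/forallP => -[e|]; apply/implyP => //.
exact: HX'S.
Qed.

End Extensions.

Lemma Bv_in n (v : {ffun 'I_n -> bool}) (e : E2n n) : (e \in Bv v) = (e.1 == v e.2).
Proof. by rewrite inE. Qed.

Lemma card_Bv n (v : {ffun 'I_n -> bool}) : #|Bv v| = n.
Proof.
rewrite (_ : Bv v = (fun j => ((v j, j) : E2n n)) @: [set: 'I_n]).
  by rewrite card_imset ?cardsT ?card_ord // => j1 j2 [_ ->].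
apply/setP => -[b j]; rewrite Bv_in /=; apply/eqP/imsetP => [->|[j' _ [-> ->]]] //.
by exists j; rewrite ?inE.
Qed.

Lemma Sset_Bv n : Sset n = Bv [ffun _ : 'I_n => false].
Proof. by apply/setP => -[b j]; rewrite Bv_in !inE ffunE /=; case: b. Qed.

Section PMatroidUSO.
Variables (n : nat) (C : {set signed (E2n n)}) (Ch : {set signed (option (E2n n))}).
Variable (i : 'I_n).
Hypothesis HP : P_matroid C.
Implicit Types (v w : {ffun 'I_n -> bool}) (j : 'I_n).

Let HOM : is_OM C. Proof. by case: HP. Qed.

(* Every B(v) is a basis: it is independent because a circuit inside it would
   violate the P-matroid condition vacuously, and it is maximal because it
   has as many elements as the basis S. *)
Lemma basis_Bv v : is_basis C (Bv v).
Proof.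
have [_ HS HPn] := HP.
have HI : independent C (Bv v).
  apply/forall_inP => X HX; apply/negP => Hs; apply: HPn; exists X => // j Hsj Htj.
  move: (subsetP Hs (s_ j)) (subsetP Hs (t_ j)).
  by rewrite !in_supp Hsj Htj !Bv_in /= => /(_ isT) /eqP <- /(_ isT).
rewrite /is_basis HI /=; apply/forallP => A; apply/implyP => Hpr; apply/negP => HA.
move: (rank_le HOM HS HA) (proper_card Hpr).
by rewrite Sset_Bv !card_Bv => /leq_ltn_trans H /H; rewrite ltnn.
Qed.

(* In a P-matroid the fundamental circuit of t_i with respect to a B(w)
   avoiding t_i is positive at s_i: otherwise the only index j with both s_j
   and t_j in its support would be i, without a sign reversal there, which
   is exactly what the P-matroid condition forbids. *)
Lemma fund_circ_ti_si w : ~~ w i -> fund_circ C (Bv w) (t_ i) (s_ i) = sp.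
Proof.
move=> Hwi; have Ht : t_ i \notin Bv w by rewrite Bv_in /=; case: (w i) Hwi.
have [HZ HZt HsZ] := fund_circP HOM (basis_Bv w) Ht.
have [_ _ HPn] := HP; set Z := fund_circ C (Bv w) (t_ i).
case E: (Z (s_ i)) => [[]|] //; exfalso; apply: HPn; exists Z => // j Hsj Htj.
all: have [Eji|Hji] := eqVneq j i; first by move: Hsj; rewrite Eji E HZt.
all: move: (subsetP HsZ (s_ j)) (subsetP HsZ (t_ j)).
all: by rewrite !in_supp Hsj Htj !in_setU1 !Bv_in /= !xpair_eqE /= (negbTE Hji) /=
       => /(_ isT) /eqP <- /(_ isT).
Qed.

Hypothesis HL : lex_extension C sm (t_ i) Ch.

Lemma USO_circ v : exists2 X, X \in Ch &
  [/\ X None = sp, (forall e, X (Some e) != sz -> e \in Bv v) &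
      forall j, USO Ch v j = sneg (X (Some ((v j, j) : E2n n)))].
Proof.
pose vT : {ffun 'I_n -> bool} := [ffun _ => true].
have HtB : t_ i \in Bv vT by rewrite Bv_in ffunE.
have [Y0 HY0 [HY0t _]] := fund_cocircuit HOM (basis_Bv vT) HtB.
have Hs0 : lex_loc sm (t_ i) Y0 != sz by rewrite /lex_loc HY0t.
have [X [Hpick HX HXN HXS]] := fund_circ_qP HOM HL (basis_Bv v) HY0 Hs0.
by exists X => //; split => // j; rewrite /USO Hpick.
Qed.

(* O(v)_j is minus the value at t_i of the fundamental cocircuit, with
   respect to B(v), of the element of B(v) of index j: C(B(v), q) is
   orthogonal to the lexicographic extension of that cocircuit, and the
   products can only be nonzero at q and at that element. *)
Lemma USO_cocirc v j Y : Y \in cocircuits C -> Y (v j, j) = sp ->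
  (forall b, b \in Bv v -> b != (v j, j) -> Y b = sz) -> USO Ch v j = sneg (Y (t_ i)).
Proof.
move=> HY HYe HYB; have [X HX [HXN HXS ->]] := USO_circ v.
have Ho := ext_cocirc_orth HL HY HX.
suff : smul (X (Some (v j, j))) (Y (v j, j)) = sneg (smul sp (smul sm (Y (t_ i)))).
  by rewrite HYe smulr1 => ->; case: (Y (t_ i)) => [[]|].
have := orth_pair (a := None) (b := Some ((v j, j) : E2n n)) Ho.
rewrite !ffunE HXN /lex_loc; apply=> -[g|]; last by left.
rewrite ffunE smul_eq0 negb_or => /andP[/HXS HgB HYg]; right; congr Some.
by apply/eqP; apply: contraNT HYg => Hne; rewrite HYB.
Qed.

(* On the lower i-facet, O(w) is the fundamental circuit of t_i with respect
   to B(w), by duality between fundamental circuits and cocircuits. *)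
Lemma USO_lower w j : ~~ w i -> USO Ch w j = fund_circ C (Bv w) (t_ i) (w j, j).
Proof.
move=> Hwi; have Ht : t_ i \notin Bv w by rewrite Bv_in /=; case: (w i) Hwi.
have He : ((w j, j) : E2n n) \in Bv w by rewrite Bv_in.
have [Y HY [HYe HYB]] := fund_cocircuit HOM (basis_Bv w) He.
by rewrite (USO_cocirc HY HYe HYB) (fund_circ_cocirc HOM (basis_Bv w) Ht HY HYe HYB) snegK.
Qed.

End PMatroidUSO.

Theorem mainTheorem7 (n : nat) (C : {set signed (E2n n)})
    (Ch : {set signed (option (E2n n))}) (i : 'I_n) :
  P_matroid C ->
  lex_extension C sm (t_ i) Ch ->
  [/\ (forall v : {ffun 'I_n -> bool}, v i ->
         USO Ch v i = sm /\ (forall j : 'I_n, j != i -> USO Ch v j = sz)),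
      (forall w : {ffun 'I_n -> bool}, ~~ w i -> USO Ch w i = sp)
    & (uniform C -> forall w : {ffun 'I_n -> bool}, ~~ w i ->
         forall j : 'I_n, USO Ch w j != sz)].
Proof.
move=> HP HL; have HOM : is_OM C by case: HP.
split.
- (* upper facet: the fundamental cocircuits of B(v) vanish at t_i, except
     that of t_i itself *)
  move=> v Hvi; have Evi : ((v i, i) : E2n n) = t_ i by rewrite /t_ Hvi.
  have HtB : t_ i \in Bv v by rewrite -Evi Bv_in.
  split.
    have [Y HY [HYt HYB]] := fund_cocircuit HOM (basis_Bv HP v) HtB.
    by rewrite (USO_cocirc HP HL (Y := Y)) ?Evi ?HYt.
  move=> j Hji; have He : ((v j, j) : E2n n) \in Bv v by rewrite Bv_in.
  have [Y HY [HYe HYB]] := fund_cocircuit HOM (basis_Bv HP v) He.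
  rewrite (USO_cocirc HP HL HY HYe HYB) HYB //.
  by apply/eqP => -[_ Eij]; rewrite Eij eqxx in Hji.
- (* lower facet, direction i: the P-matroid sign of C(B(w), t_i) at s_i *)
  by move=> w Hwi; rewrite (USO_lower HP HL) // (negbTE Hwi) fund_circ_ti_si.
- (* uniform case: C(B(w), t_i) is supported on all of t_i |: B(w) *)
  move=> HU w Hwi j; rewrite (USO_lower HP HL) //.
  apply: uniform_fund_circ HOM HU (basis_Bv HP w) _ _; first by rewrite Bv_in.
  by rewrite Bv_in /=; case: (w i) Hwi.
Qed.
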